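(* Let $(X,u)$ and $(Y,v)$ be Čech closure spaces, let $Y^X$ be the set of all continuous maps $(X,u)\to(Y,v)$, let $(f_\lambda)_{\lambda\in\Lambda}$ be a net in $Y^X$ and $f\in Y^X$. Then $(f_\lambda)$ converges continuously to $f$ if and only if for every $x\in X$ and every neighbourhood $V$ of $f(x)$ in $(Y,v)$ there exist a neighbourhood $U$ of $x$ in $(X,u)$ and $\lambda_0\in\Lambda$ such that $f_\lambda(U)\subset V$ for all $\lambda\ge\lambda_0$.
   Context: A Čech closure space $(X,u)$ is a set $X$ with an operator $u:\mathcal P(X)\to\mathcal P(X)$ satisfying $u(\emptyset)=\emptyset$, $A\subset u(A)$, and $u(A\cup B)=u(A)\cup u(B)$. The interior is $\mathrm{int}_u A=X\setminus u(X\setminus A)$; $U$ is a neighbourhood of $x$ if $x\in\mathrm{int}_uU$. A map $f:(X,u)\to(Y,v)$ is continuous if $f(u(A))\subset v(f(A))$ for all $A\subset X$. A net $(x_\mu)_{\mu\in M}$ converges to $x$ if for every neighbourhood $U$ of $x$ there is $\mu_0$ with $x_\mu\in U$ for all $\mu\ge\mu_0$. A net $(f_\lambda)_{\lambda\in\Lambda}$ in $Y^X$ converges continuously to $f\in Y^X$ if, whenever a net $(x_\mu)_{\mu\in M}$ converges to $x$ in $(X,u)$, the net $(f_\lambda(x_\mu))_{(\lambda,\mu)\in\Lambda\times M}$ (with $\Lambda\times M$ ordered coordinatewise) converges to $f(x)$ in $(Y,v)$. *)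

Set Implicit Arguments.

Definition set (X : Type) := X -> Prop.
Definition setU {X} (A B : set X) : set X := fun x => A x \/ B x.
Definition setC {X} (A : set X) : set X := fun x => ~ A x.
Definition set0 {X} : set X := fun _ => False.
Definition image {X Y} (f : X -> Y) (A : set X) : set Y :=
  fun y => exists x, A x /\ f x = y.

Record closure (X : Type) := Closure {
  cl : set X -> set X;
  cl_empty : forall x, ~ cl set0 x;
  cl_ext : forall (A : set X) x, A x -> cl A x;
  cl_union : forall (A B : set X) x, cl (setU A B) x <-> (cl A x \/ cl B x)
}.

Definition interior {X} (u : closure X) (A : set X) : set X :=
  fun x => ~ cl u (setC A) x.

Definition nbhd {X} (u : closure X) (x : X) (U : set X) : Prop :=
  interior u U x.

Definition continuous {X Y} (u : closure X) (v : closure Y) (f : X -> Y) :=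
  forall (A : set X) x, cl u A x -> cl v (image f A) (f x).

Record directed := Directed {
  dcar :> Type;
  dle : dcar -> dcar -> Prop;
  dle_refl : forall a, dle a a;
  dle_trans : forall a b c, dle a b -> dle b c -> dle a c;
  dle_dir : forall a b, exists c, dle a c /\ dle b c;
  dnonempty : inhabited dcar
}.

Definition net_conv {I X} (le : I -> I -> Prop) (u : closure X)
  (net : I -> X) (x : X) : Prop :=
  forall U, nbhd u x U -> exists i0, forall i, le i0 i -> U (net i).

Definition prod_le (L M : directed) (p q : L * M) : Prop :=
  dle L (fst p) (fst q) /\ dle M (snd p) (snd q).

Definition cont_conv {X Y} (u : closure X) (v : closure Y) {L : directed}
  (F : L -> X -> Y) (f : X -> Y) : Prop :=
  forall (M : directed) (xs : M -> X) (x : X),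
    net_conv (dle M) u xs x ->
    net_conv (prod_le L M) v (fun p => F (fst p) (xs (snd p))) (f x).

(* If every neighbourhood V of f(x) eventually contains f_λ(U) for some
   neighbourhood U of x, then any net x_μ → x eventually lies in U, so
   f_λ(x_μ) ∈ V for (λ, μ) large.  Conversely, if this fails for x and V, then
   for every neighbourhood U of x and every λ0 there are λ ≥ λ0 and y ∈ U with
   f_λ(y) ∉ V; indexed by the pairs (U, λ0), ordered by reverse inclusion and
   by the order of Λ, these points y form a net converging to x along which
   f_λ(y) stays outside V, contradicting continuous convergence. *)

From Stdlib Require Import Classical ClassicalEpsilon FunctionalExtensionality PropExtensionality.

Lemma cl_subset {X} (u : closure X) (A B : set X) x :
  (forall y, A y -> B y) -> cl u A x -> cl u B x.
Proof.
  intros hAB hA.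
  assert (B_eq : B = setU A B).
  { apply functional_extensionality; intro y; apply propositional_extensionality.
    unfold setU; split; [auto | intros [h | h]; auto]. }
  rewrite B_eq. apply (proj2 (cl_union u A B x)). auto.
Qed.

Lemma nbhdI {X} (u : closure X) x (U W : set X) :
  nbhd u x U -> nbhd u x W -> nbhd u x (fun y => U y /\ W y).
Proof.
  unfold nbhd, interior; intros hU hW hUW.
  apply (cl_subset u _ (setU (setC U) (setC W)) x) in hUW.
  - apply (proj1 (cl_union u _ _ x)) in hUW. tauto.
  - intros y hy. unfold setU, setC in *. apply NNPP; tauto.
Qed.

Lemma nbhdT {X} (u : closure X) x : nbhd u x (fun _ => True).
Proof.
  unfold nbhd, interior; intro hT.
  apply (cl_subset u _ set0 x) in hT.
  - exact (cl_empty u x hT).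
  - unfold setC; intros y hy; tauto.
Qed.

Section NbhdDirected.
Context {X : Type} (u : closure X) (x : X).

Definition nbhd_le (U W : {U : set X | nbhd u x U}) : Prop :=
  forall y, proj1_sig W y -> proj1_sig U y.

Lemma nbhd_le_refl U : nbhd_le U U.
Proof. unfold nbhd_le; auto. Qed.

Lemma nbhd_le_trans U W Z : nbhd_le U W -> nbhd_le W Z -> nbhd_le U Z.
Proof. unfold nbhd_le; auto. Qed.

Lemma nbhd_le_dir U W : exists Z, nbhd_le U Z /\ nbhd_le W Z.
Proof.
  destruct U as [U hU], W as [W hW].
  exists (exist _ _ (nbhdI u x U W hU hW)).
  unfold nbhd_le; simpl; split; intros y [hUy hWy]; assumption.
Qed.

Lemma nbhd_inhabited : inhabited {U : set X | nbhd u x U}.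
Proof. constructor. exact (exist _ _ (nbhdT u x)). Qed.

Definition nbhd_directed : directed :=
  Directed nbhd_le nbhd_le_refl nbhd_le_trans nbhd_le_dir nbhd_inhabited.

End NbhdDirected.

Section ProdDirected.
Variables A B : directed.

Lemma prod_le_refl p : prod_le A B p p.
Proof. split; apply dle_refl. Qed.

Lemma prod_le_trans p q r : prod_le A B p q -> prod_le A B q r -> prod_le A B p r.
Proof. intros [hpq1 hpq2] [hqr1 hqr2]; split; eapply dle_trans; eauto. Qed.

Lemma prod_le_dir p q : exists r, prod_le A B p r /\ prod_le A B q r.
Proof.
  destruct (dle_dir A (fst p) (fst q)) as [a [hpa hqa]].
  destruct (dle_dir B (snd p) (snd q)) as [b [hpb hqb]].
  exists (a, b); split; split; assumption.
Qed.

Lemma prod_inhabited : inhabited (A * B).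
Proof.
  destruct (dnonempty A) as [a], (dnonempty B) as [b]. exact (inhabits (a, b)).
Qed.

Definition prod_directed : directed :=
  Directed (prod_le A B) prod_le_refl prod_le_trans prod_le_dir prod_inhabited.

End ProdDirected.

Lemma net_conv_nbhd_selection {X} (u : closure X) x (M : directed)
  (xs : prod_directed (nbhd_directed u x) M -> X) :
  (forall p, proj1_sig (fst p) (xs p)) -> net_conv (dle _) u xs x.
Proof.
  intros xs_in W hW.
  destruct (dnonempty M) as [m].
  exists (exist _ W hW, m). intros p [hWp _]. apply hWp, xs_in.
Qed.

Definition nbhd_conv {X Y} (u : closure X) (v : closure Y) {L : directed}
  (F : L -> X -> Y) (f : X -> Y) : Prop :=
  forall (x : X) (V : set Y), nbhd v (f x) V ->
    exists (U : set X) (l0 : L), nbhd u x U /\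
      forall l, dle L l0 l -> forall y, U y -> V (F l y).

Section ContConvNbhdConv.
Context {X Y : Type} (u : closure X) (v : closure Y) {L : directed}
  (F : L -> X -> Y) (f : X -> Y).

Lemma nbhd_conv_cont_conv : nbhd_conv u v F f -> cont_conv u v F f.
Proof.
  intros hF M xs x hxs V hV.
  destruct (hF x V hV) as [U [l0 [hU FUV]]].
  destruct (hxs U hU) as [m0 xs_in_U].
  exists (l0, m0). intros [l m] [hl hm]. apply FUV; auto.
Qed.

Lemma cont_conv_nbhd_conv : cont_conv u v F f -> nbhd_conv u v F f.
Proof.
  intros hF x V hV. apply NNPP; intro not_conv.
  pose (M := prod_directed (nbhd_directed u x) L).
  assert (escape : forall p : M, exists q : L * X,
    dle L (snd p) (fst q) /\ proj1_sig (fst p) (snd q) /\ ~ V (F (fst q) (snd q))).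
  { intros [[U hU] l0]. apply NNPP; intro no_escape. apply not_conv.
    exists U, l0; split; [exact hU |].
    intros l hl y hy. apply NNPP; intro hVy. apply no_escape.
    exists (l, y); auto. }
  destruct (choice _ escape) as [g hg].
  assert (g_conv : net_conv (dle M) u (fun p => snd (g p)) x).
  { apply net_conv_nbhd_selection. intro p. apply hg. }
  destruct (hF M _ x g_conv V hV) as [[l1 [U1 m1]] eventually_V].
  destruct (dle_dir L l1 m1) as [c [hl1c hm1c]].
  destruct (hg (U1, c)) as [hcg [_ hVg]].
  apply hVg, (eventually_V (fst (g (U1, c)), (U1, c))).
  split; simpl.
  - eapply dle_trans; eassumption.
  - split; [apply nbhd_le_refl | exact hm1c].
Qed.

End ContConvNbhdConv.

Theorem theorem2 (X Y : Type) (u : closure X) (v : closure Y) (L : directed)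
  (F : L -> X -> Y) (f : X -> Y) :
  (forall l, continuous u v (F l)) -> continuous u v f ->
  (cont_conv u v F f <->
   forall (x : X) (V : set Y), nbhd v (f x) V ->
     exists (U : set X) (l0 : L), nbhd u x U /\
       forall l, dle L l0 l -> forall y, U y -> V (F l y)).
Proof.
  intros _ _. split.
  - apply cont_conv_nbhd_conv.
  - apply nbhd_conv_cont_conv.
Qed.
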